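(* If $\vec \theta \in \Lambda$, then for every index $(\{i, j\},a)$ we have $\theta_{\{i,j\},a} \equiv 0 \pmod{\frac{2\pi}{\nu}}$, where $\nu$ is the order of $a$ in $\mathbb Z_g$. In particular, for all nonzero $a\in\mathbb Z_g$, $\theta_{\{i,j\},a} \equiv 0 \pmod{\frac{2\pi}{g}}$.
   Context: Let $g\ge 2$, $k\ge 2$ be integers, $\mathbb Z_g$ the integers mod $g$, and $d=\binom{k}{2}(g-1)$. Index the coordinates of $\mathbb R^d$ by pairs $(\{i,j\},a)$ with $1\le i<j\le k$ and $a\in\mathbb Z_g\setminus\{0\}$. Define $Z:(\mathbb Z_g)^k\to\mathbb R^d$ by $[Z(\vec x)]_{\{i,j\},a}=1-1/g$ if $x_i-x_j=a$ and $-1/g$ otherwise. Define $\Phi(\vec\theta)=\sum_{\vec x\in(\mathbb Z_g)^k} g^{-k}e^{i\vec\theta\cdot Z(\vec x)}$ for $\vec\theta\in\mathbb R^d$, and $\Lambda=\{\vec\theta\in\mathbb R^d: |\Phi(\vec\theta)|=1\}$. *)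

From mathcomp Require Import all_boot all_order all_algebra all_fingroup.
From mathcomp Require Import complex.
From mathcomp Require Import all_classical all_reals all_analysis.
Set Implicit Arguments. Unset Strict Implicit. Unset Printing Implicit Defensive.
Import GRing.Theory Num.Theory.
Local Open Scope ring_scope.

(* Coordinates of R^d are indexed by ((i,j),a) with i < j in 'I_k
   (0-based version of 1 <= i < j <= k) and a : 'Z_g, a != 0.
   A vector theta in R^d is represented by a function
   theta : 'I_k -> 'I_k -> 'Z_g -> R, of which only the values at
   i < j, a != 0 are used. *)

Definition Zcoord (R : realType) (g k : nat) (x : {ffun 'I_k -> 'Z_g})
  (i j : 'I_k) (a : 'Z_g) : R :=
  (if x i - x j == a then 1 else 0) - 1 / g%:R.

Definition dotZ (R : realType) (g k : nat) (theta : 'I_k -> 'I_k -> 'Z_g -> R)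
  (x : {ffun 'I_k -> 'Z_g}) : R :=
  \sum_(i : 'I_k) \sum_(j : 'I_k | (i < j)%N) \sum_(a : 'Z_g | a != 0)
     theta i j a * Zcoord R x i j a.

Definition Phi (R : realType) (g k : nat) (theta : 'I_k -> 'I_k -> 'Z_g -> R)
  : R[i] :=
  \sum_(x : {ffun 'I_k -> 'Z_g})
     ((g%:R ^- k : R)%:C * (cos (dotZ theta x) +i* sin (dotZ theta x)))%C.

Definition inLambda (R : realType) (g k : nat)
  (theta : 'I_k -> 'I_k -> 'Z_g -> R) : Prop :=
  `|Phi theta| = 1.

From mathcomp Require Import all_boot all_order all_algebra all_fingroup.
From mathcomp Require Import complex.
From mathcomp Require Import all_classical all_reals all_analysis.
From mathcomp Require Import ring lra.
Import GRing.Theory Num.Theory Order.TTheory.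
Local Open Scope ring_scope.
Set Implicit Arguments. Unset Strict Implicit. Unset Printing Implicit Defensive.

(* If |Phi(theta)| = 1, the unit complex numbers e^{i theta.Z(x)} averaged in
   Phi must all be equal, so theta.Z(x) is constant modulo 2 pi.  Let x(u, v)
   have x_i = u, x_j = v and all other coordinates 0.  In the mixed second
   difference of theta.Z(x(u, v)) in (u, v) every pair other than {i, j}
   cancels, which shows that phi(c) := theta_{{i,j},c} (with phi(0) = 0)
   satisfies phi(u + v) = phi(u) + phi(v) modulo 2 pi.  Hence
   n phi(a) = phi(n a) = phi(0) = 0 modulo 2 pi whenever n a = 0, in
   particular for n = ord(a) and for n = g. *)

Definition int_multiple (R : pzRingType) (c t : R) := exists m : int, t = m%:~R * c.

Section IntMultiple.
Variables (R : pzRingType) (c : R).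

Lemma int_multiple0 : int_multiple c 0.
Proof. by exists 0; rewrite mul0r. Qed.

Lemma int_multipleB t s :
  int_multiple c t -> int_multiple c s -> int_multiple c (t - s).
Proof. by move=> [m ->] [n ->]; exists (m - n); rewrite intrB mulrBl. Qed.

Lemma int_multipleN t : int_multiple c t -> int_multiple c (- t).
Proof. by move=> ht; rewrite -sub0r; apply: int_multipleB int_multiple0 ht. Qed.

Lemma int_multipleD t s :
  int_multiple c t -> int_multiple c s -> int_multiple c (t + s).
Proof. by move=> ht hs; rewrite -[s]opprK; apply/int_multipleB/int_multipleN. Qed.

End IntMultiple.

Lemma int_multiple_mulrn (R : numFieldType) (c t : R) n : (0 < n)%N ->
  int_multiple c (t *+ n) -> int_multiple (c / n%:R) t.
Proof.
move=> n_gt0 [m hm]; exists m.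
have n_neq0 : n%:R != 0 :> R by rewrite pnatr_eq0 -lt0n.
by rewrite mulrA -hm -(mulr_natr t) mulfK.
Qed.

Lemma periodicz (U V : zmodType) (f : U -> V) (T : U) :
  periodic f T -> forall (m : int) a, f (a + T *~ m) = f a.
Proof.
move=> fT [n|n] a; first exact: periodicn.
by rewrite NegzE mulrNz -[in RHS](subrK (T *+ n.+1) a) periodicn.
Qed.

Lemma cos_eq1 (R : realType) (t : R) : cos t = 1 -> int_multiple (2 * pi) t.
Proof.
move=> cos_t.
have pi_gt0 := @pi_gt0 R.
have twopi_gt0 : 0 < 2 * pi :> R by rewrite mulr_gt0.
set m := Num.floor (t / (2 * pi)).
set r := t - m%:~R * (2 * pi).
have r_ge0 : 0 <= r.
  by move: (floor_le (t / (2 * pi))); rewrite ler_pdivlMr // /r subr_ge0.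
have r_lt : r < 2 * pi.
  move: (floorD1_gt (t / (2 * pi))); rewrite ltr_pdivrMr // intrD mulrDl mul1r.
  by rewrite /r; lra.
have cos_r : cos r = 1.
  by rewrite /r mulrzl -mulrNz mulr_natl periodicz ?cos_t //; exact: cosD2pi.
exists m; apply/eqP; rewrite -subr_eq0 -/r; apply/eqP.
have [r_le|r_gt] := lerP r pi.
  by apply: cos_inj; rewrite ?cos_r ?cos0 // in_itv /= ?r_ge0 ?r_le ?lexx ?ltW.
(* Reflecting r through 2 pi lands in [0, pi], where cos is injective. *)
have cos_r' : cos (2 * pi - r) = 1.
  by rewrite addrC mulr_natl cosD2pi cosN.
suff : 2 * pi - r = 0 by lra.
by apply: cos_inj; rewrite ?cos_r' ?cos0 // in_itv /= ?lexx ?ltW //; lra.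
Qed.

Lemma sum_complex (R : pzRingType) (T : finType) (a b : T -> R) :
  (\sum_x (a x +i* b x) = (\sum_x a x) +i* (\sum_x b x))%C.
Proof.
apply: (big_ind3 (fun s u v => s = (u +i* v)%C)) => //.
by move=> s1 u1 v1 s2 u2 v2 -> ->.
Qed.

Section PhaseCoherence.
Variables (R : realType) (T : finType) (al : T -> R).

Lemma sum_cosB : \sum_x \sum_y cos (al x - al y) =
  (\sum_x cos (al x)) ^+ 2 + (\sum_x sin (al x)) ^+ 2.
Proof.
under eq_bigr => x _ do under eq_bigr => y _ do rewrite cosB.
under eq_bigr => x _ do rewrite big_split /= -!mulr_sumr.
by rewrite big_split /= -!mulr_suml.
Qed.

Lemma cosB_eq1_of_sum_sqr :
  (\sum_x cos (al x)) ^+ 2 + (\sum_x sin (al x)) ^+ 2 = #|T|%:R ^+ 2 ->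
  forall x y, cos (al x - al y) = 1.
Proof.
move=> sum_sqr x y.
have gap_ge0 x' y' : 0 <= 1 - cos (al x' - al y') by rewrite subr_ge0 cos_le1.
have gap_sum0 : \sum_x \sum_y (1 - cos (al x - al y)) = 0.
  under eq_bigr => x' _ do rewrite sumrB.
  by rewrite sumrB sum_cosB sum_sqr !sumr_const expr2 mulr_natr subrr.
have := psumr_eq0P (fun x' _ => sumr_ge0 _ (fun y' _ => gap_ge0 x' y')) gap_sum0.
move=> /(_ x isT) /(psumr_eq0P (fun y' _ => gap_ge0 x y')) /(_ y isT) /eqP.
by rewrite subr_eq0 eq_sym => /eqP.
Qed.

Lemma cosB_eq1_of_norm_mean (c : R) : c * #|T|%:R = 1 ->
  `|\sum_x (c%:C * (cos (al x) +i* sin (al x)))%C| = 1 ->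
  forall x y, cos (al x - al y) = 1.
Proof.
move=> c_card norm1; apply: cosB_eq1_of_sum_sqr; move: norm1.
have -> : \sum_x (c%:C * (cos (al x) +i* sin (al x)))%C =
    ((c * \sum_x cos (al x)) +i* (c * \sum_x sin (al x)))%C.
  rewrite !mulr_sumr -sum_complex; apply: eq_bigr => x _.
  by rewrite [LHS]/GRing.mul /= !mul0r subr0 addr0.
rewrite normc_def /= => -[sqrt_eq1].
have norm_sqr : (c * \sum_x cos (al x)) ^+ 2 + (c * \sum_x sin (al x)) ^+ 2 = 1.
  by rewrite -[LHS]sqr_sqrtr ?addr_ge0 ?sqr_ge0 // sqrt_eq1 expr1n.
set sc := \sum_x cos (al x) in norm_sqr *; set ss := \sum_x sin (al x) in norm_sqr *.
transitivity ((c * #|T|%:R) ^+ 2 * (sc ^+ 2 + ss ^+ 2)).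
  by rewrite c_card expr1n mul1r.
by rewrite -[RHS]mulr1 -norm_sqr; ring.
Qed.

End PhaseCoherence.

Section MixedDifference.
Variables S V : zmodType.

Definition mixed_diff (F : S -> S -> V) (u v : S) : V :=
  (F u v - F u 0) - (F 0 v - F 0 0).

Lemma eq_mixed_diff (F G : S -> S -> V) :
  (forall u v, F u v = G u v) -> mixed_diff F =2 mixed_diff G.
Proof. by move=> eqFG u v; rewrite /mixed_diff !eqFG. Qed.

Lemma mixed_diff_subr (F : S -> S -> V) (c : V) u v :
  mixed_diff (fun u v => F u v - c) u v = mixed_diff F u v.
Proof. by rewrite /mixed_diff !(opprB _ c) !subrKA. Qed.

Lemma mixed_diff_sum (I : Type) (r : seq I) (P : pred I) (F : I -> S -> S -> V) u v :
  mixed_diff (fun u v => \sum_(i <- r | P i) F i u v) u v =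
  \sum_(i <- r | P i) mixed_diff (F i) u v.
Proof. by rewrite /mixed_diff -!sumrB. Qed.

Lemma mixed_diff_eq0 (F : S -> S -> V) :
  (forall u v, F u v = F u 0) \/ (forall u v, F u v = F 0 v) ->
  forall u v, mixed_diff F u v = 0.
Proof.
case=> sepF u v; rewrite /mixed_diff.
- by rewrite sepF (sepF 0 v) !subrr.
- by rewrite sepF (sepF u 0) subrr.
Qed.

End MixedDifference.

Section PairConfigurations.
Variables (R : realType) (g k : nat) (theta : 'I_k -> 'I_k -> 'Z_g -> R).

(* [phase i j] is the phi of the header, written as the indicator sum in
   which it occurs in theta.Z(x). *)
Definition phase (p q : 'I_k) (c : 'Z_g) : R :=
  \sum_(a : 'Z_g | a != 0) theta p q a * (if c == a then 1 else 0).

Lemma phase0 p q : phase p q 0 = 0.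
Proof. by apply: big1 => a a_neq0; rewrite eq_sym (negbTE a_neq0) mulr0. Qed.

Lemma phase_nz p q a : a != 0 -> phase p q a = theta p q a.
Proof.
move=> a_neq0; rewrite /phase (bigD1 a) //= eqxx mulr1 big1 ?addr0 //.
by move=> b /andP [_ b_neq_a]; rewrite eq_sym (negbTE b_neq_a) mulr0.
Qed.

Lemma dotZE x : dotZ theta x =
  \sum_(pq : 'I_k * 'I_k | (pq.1 < pq.2)%N)
     (phase pq.1 pq.2 (x pq.1 - x pq.2) -
      \sum_(a : 'Z_g | a != 0) theta pq.1 pq.2 a / g%:R).
Proof.
rewrite /dotZ (pair_big_dep xpredT (fun p q : 'I_k => (p < q)%N)) /=.
apply: eq_bigr => -[p q] _ /=; rewrite /phase -sumrB.
by apply: eq_bigr => a _; rewrite /Zcoord mulrBr div1r.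
Qed.

Definition pair_config (i j : 'I_k) (u v : 'Z_g) : {ffun 'I_k -> 'Z_g} :=
  [ffun l => if l == i then u else if l == j then v else 0].

Lemma mixed_diff_pair_config_off (V : zmodType) (f : 'Z_g -> V) (i j p q : 'I_k) :
  (i < j)%N -> (p < q)%N -> (p, q) != (i, j) ->
  forall u v, mixed_diff
    (fun u v => f (pair_config i j u v p - pair_config i j u v q)) u v = 0.
Proof.
move=> lt_ij lt_pq pq_neq; apply: mixed_diff_eq0; rewrite /pair_config.
have j_neq_i : j != i by rewrite neq_ltn lt_ij orbT.
have [p_eq_i|p_neq_i] := eqVneq p i.
  have q_neq_i : q != i by rewrite -p_eq_i neq_ltn lt_pq orbT.
  have q_neq_j : q != j by apply: contraNneq pq_neq => ->; rewrite p_eq_i.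
  by left=> u v; rewrite !ffunE p_eq_i eqxx (negbTE q_neq_i) (negbTE q_neq_j).
have [p_eq_j|p_neq_j] := eqVneq p j.
  have lt_jq : (j < q)%N by rewrite -p_eq_j.
  have q_neq_i : q != i by rewrite neq_ltn (ltn_trans lt_ij lt_jq) orbT.
  have q_neq_j : q != j by rewrite neq_ltn lt_jq orbT.
  by right=> u v; rewrite !ffunE p_eq_j eqxx (negbTE j_neq_i) (negbTE q_neq_i)
    (negbTE q_neq_j).
have [q_eq_i|q_neq_i] := eqVneq q i.
  by left=> u v; rewrite !ffunE q_eq_i eqxx (negbTE p_neq_i) (negbTE p_neq_j).
by right=> u v; rewrite !ffunE (negbTE p_neq_i) (negbTE p_neq_j) (negbTE q_neq_i).
Qed.

Lemma mixed_diff_dotZ_pair_config (i j : 'I_k) u v : (i < j)%N ->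
  mixed_diff (fun u v => dotZ theta (pair_config i j u v)) u v =
  phase i j (u - v) - phase i j u - phase i j (- v).
Proof.
move=> lt_ij.
have j_neq_i : j != i by rewrite neq_ltn lt_ij orbT.
rewrite (eq_mixed_diff (fun u v => dotZE (pair_config i j u v))) mixed_diff_sum.
rewrite (bigD1 (i, j)) //= [X in _ + X]big1 ?addr0; last first.
  move=> [p q] /= /andP [lt_pq pq_neq].
  by rewrite mixed_diff_subr (mixed_diff_pair_config_off (phase p q)).
rewrite mixed_diff_subr /mixed_diff /pair_config !ffunE eqxx (negbTE j_neq_i) eqxx.
by rewrite subr0 sub0r subrr phase0 subr0.
Qed.

Lemma inLambda_cosB : (1 < g)%N -> inLambda theta ->
  forall x y, cos (dotZ theta x - dotZ theta y) = 1.
Proof.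
move=> g_gt1; apply: cosB_eq1_of_norm_mean.
rewrite card_ffun card_ord /= card_ord Zp_cast // natrX mulVf //.
by rewrite expf_neq0 // pnatr_eq0 -lt0n ltnW.
Qed.

Lemma inLambda_phase_cocycle (i j : 'I_k) :
  (1 < g)%N -> inLambda theta -> (i < j)%N ->
  forall u v, int_multiple (2 * pi) (phase i j (u + v) - phase i j u - phase i j v).
Proof.
move=> g_gt1 hL lt_ij u v.
have dotZ_mod x y := cos_eq1 (inLambda_cosB g_gt1 hL x y).
have := mixed_diff_dotZ_pair_config u (- v) lt_ij; rewrite opprK => <-.
exact: int_multipleB.
Qed.

End PairConfigurations.

Section Cocycle.
Variables (R : numFieldType) (V : zmodType) (c : R) (phi : V -> R).
Hypothesis phi_cocycle : forall u v, int_multiple c (phi (u + v) - phi u - phi v).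

Lemma cocycle0 : int_multiple c (phi 0).
Proof.
have := int_multipleN (phi_cocycle 0 0).
by rewrite addr0 subrr sub0r opprK.
Qed.

Lemma cocycle_mulrn a n : int_multiple c (phi (a *+ n) - phi a *+ n).
Proof.
elim: n => [|n IHn]; first by rewrite !mulr0n subr0; exact: cocycle0.
have -> : phi (a *+ n.+1) - phi a *+ n.+1 =
    (phi (a *+ n + a) - phi (a *+ n) - phi a) + (phi (a *+ n) - phi a *+ n).
  by rewrite !mulrSr; ring.
exact: int_multipleD.
Qed.

Lemma cocycle_torsion a n : (0 < n)%N -> a *+ n = 0 ->
  int_multiple (c / n%:R) (phi a).
Proof.
move=> n_gt0 an0; apply: (int_multiple_mulrn (R := R) n_gt0).
have := int_multipleB cocycle0 (cocycle_mulrn a n).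
by rewrite an0 opprB subrKC.
Qed.

End Cocycle.

Theorem corollary2p4 (R : realType) (g k : nat) (hg : (1 < g)%N) (hk : (1 < k)%N)
  (theta : 'I_k -> 'I_k -> 'Z_g -> R) :
  inLambda theta ->
  forall (i j : 'I_k) (a : 'Z_g), (i < j)%N -> a != 0 ->
    (exists m : int, theta i j a = m%:~R * (2 * pi / (#[a]%g)%:R)) /\
    (exists m : int, theta i j a = m%:~R * (2 * pi / g%:R)).
Proof.
move=> hL i j a lt_ij a_neq0.
have cocycle := inLambda_phase_cocycle hg hL lt_ij.
rewrite -(phase_nz theta i j a_neq0).
split; apply: (cocycle_torsion cocycle).
- exact: order_gt0.
- by rewrite Zp_mulrn -Zp_expg expg_order.
- exact: ltnW.
- by rewrite -mulr_natr pchar_Zp // mulr0.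
Qed.
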